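(* Let $d\in\{1,2,3,7,11\}$, $K=\mathbb{Q}(\sqrt{-d})$, $\mathcal{O}_d$ its ring of integers, $\Delta$ a positive integer not of the form $\beta\bar\beta$ with $\beta\in\mathcal{O}_d$, and $k\ge1$ odd. Let $$H_{k,\Delta}(z)=\sum_{\substack{(a,b,c)\in\mathbb{Z}\times\mathcal{O}_d\times\mathbb{Z}\\ b\bar b-ac=\Delta,\ a<0}}\max\left(0,\left(a|z|^2+bz+\bar b\bar z+c\right)^k\right).$$ Then for all $z\in\mathbb{C}$: (1) $H_{k,\Delta}(\bar z)=H_{k,\Delta}(z)$; (2) $H_{k,\Delta}(uz)=H_{k,\Delta}(z)$ for every unit $u\in\mathcal{O}_d^\times$; (3) $H_{k,\Delta}(z+\lambda)=H_{k,\Delta}(z)$ for every $\lambda\in\mathcal{O}_d$. *)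

From mathcomp Require Import all_boot all_order all_algebra.
From mathcomp Require Import all_classical all_reals all_analysis.
From mathcomp Require Export complex.
Import GRing.Theory Num.Theory.

Unset Printing Implicit Defensive.

Local Open Scope ring_scope.
Local Open Scope complex_scope.
Local Open Scope classical_set_scope.

(* The standard Z-generator omega_d of the ring of integers O_d of Q(sqrt(-d)),
   for squarefree d > 0:  omega_d = sqrt(-d)        if -d = 2,3 mod 4 (d = 1, 2),
                          omega_d = (1+sqrt(-d))/2  if -d = 1 mod 4  (d = 3, 7, 11). *)
Definition omega_d (R : realType) (d : nat) : R[i] :=
  if (d == 1)%N || (d == 2)%N then 0 +i* Num.sqrt (d%:R : R)
  else (2%:R^-1) +i* (Num.sqrt (d%:R : R) / 2%:R).

Definition O_d (R : realType) (d : nat) : set R[i] :=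
  [set z | exists x y : int, z = (x%:~R)%:C + (y%:~R)%:C * omega_d R d].

Definition unit_O_d (R : realType) (d : nat) (u : R[i]) : Prop :=
  O_d R d u /\ exists v, O_d R d v /\ u * v = 1.

Definition H_index (R : realType) (d Delta : nat) : set (int * R[i] * int) :=
  [set t | O_d R d t.1.2 /\
           t.1.2 * t.1.2^* - ((t.1.1 * t.2)%:~R)%:C = (Delta%:R)%:C /\
           (t.1.1 < 0)%R].

Definition H_form (R : realType) (t : int * R[i] * int) (z : R[i]) : R :=
  complex.Re ((t.1.1%:~R)%:C * (z * z^*) + t.1.2 * z + t.1.2^* * z^*
              + (t.2%:~R)%:C).

Definition H_kDelta (R : realType) (d k Delta : nat) (z : R[i]) : \bar R :=
  \esum_(t in H_index R d Delta) (Num.max 0 (H_form R t z ^+ k))%:E.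

(* Each substitution z -> conj z, u z, z + l turns a|z|^2 + b z + conj(b z) + c
   into a form of the same shape whose coefficients (a, b', c') again lie in
   Z x O_d x Z with the same a < 0 and the same |b'|^2 - a c' = Delta; it thus
   permutes the index set, and H_{k,Delta} is merely reindexed.  For
   translations c' = c + a|l|^2 - Tr(b l), an integer because O_d = Z[w] has
   integral norms and traces, Tr w and |w|^2 being integers.  The hypotheses on
   Delta and k matter for H_{k,Delta} being finite and nonzero, not for these
   invariances. *)
From mathcomp Require Import all_boot all_order all_algebra.
From mathcomp Require Import all_classical all_reals all_analysis.
From mathcomp Require Import complex.
From mathcomp Require Import ring lra.
Import GRing.Theory Num.Theory.
Local Open Scope complex_scope.
Local Open Scope ring_scope.

Lemma complex_intr (R : realType) (n : int) : (n%:~R : R)%:C = n%:~R :> R[i].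
Proof. exact: (rmorph_int (@real_complex R)). Qed.

Lemma floor_Re_intr {R : realType} {x : R[i]} {n : int} :
  x = n%:~R -> Num.floor (complex.Re x) = n.
Proof. by move->; rewrite -complex_intr intrKfloor. Qed.

Section IntegralSpan.
Context {R : realType} {w : R[i]} {s m : int}.
Hypotheses (w_trace : w + w^* = s%:~R) (w_norm : w * w^* = m%:~R).

Definition Zadjoin : set R[i] := [set z | exists x y : int, z = x%:~R + y%:~R * w].

Lemma Zadjoin_intr (n : int) : Zadjoin n%:~R.
Proof. by exists n, 0; rewrite mul0r addr0. Qed.

Lemma Zadjoin_sub a b : Zadjoin a -> Zadjoin b -> Zadjoin (a - b).
Proof.
move=> [x [y ->]] [x' [y' ->]]; exists (x - x'), (y - y').
by rewrite !intrB; ring.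
Qed.

Lemma Zadjoin_opp a : Zadjoin a -> Zadjoin (- a).
Proof. by move=> [x [y ->]]; exists (- x), (- y); rewrite !intrN; ring. Qed.

Lemma Zadjoin_conj a : Zadjoin a -> Zadjoin a^*.
Proof.
have w_conj : w^* = s%:~R - w by rewrite -w_trace addrC addKr.
move=> [x [y ->]]; exists (x + y * s), (- y).
by rewrite rmorphD rmorphM /= !rmorph_int w_conj intrD intrM intrN; ring.
Qed.

Lemma Zadjoin_mul a b : Zadjoin a -> Zadjoin b -> Zadjoin (a * b).
Proof.
have w_sqr : w * w = s%:~R * w - m%:~R by rewrite -w_norm -w_trace; ring.
move=> [x [y ->]] [x' [y' ->]].
exists (x * x' - y * y' * m), (x * y' + x' * y + y * y' * s).
rewrite !(intrD, intrM, intrB).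
transitivity (x%:~R * x'%:~R + (x%:~R * y'%:~R + x'%:~R * y%:~R) * w
              + y%:~R * y'%:~R * (w * w) : R[i]); first by ring.
by rewrite w_sqr; ring.
Qed.

Lemma Zadjoin_trace a : Zadjoin a -> exists n : int, a + a^* = n%:~R.
Proof.
move=> [x [y ->]]; exists (x + x + y * s).
rewrite rmorphD rmorphM /= !rmorph_int !(intrD, intrM) -w_trace; ring.
Qed.

Lemma Zadjoin_norm a : Zadjoin a -> exists n : int, a * a^* = n%:~R.
Proof.
move=> [x [y ->]]; exists (x * x + x * y * s + y * y * m).
rewrite rmorphD rmorphM /= !rmorph_int !(intrD, intrM) -w_trace -w_norm; ring.
Qed.

Lemma Zadjoin_unit_norm u v : Zadjoin u -> Zadjoin v -> u * v = 1 -> u * u^* = 1.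
Proof.
move=> /Zadjoin_norm [n un] /Zadjoin_norm [n' vn] uv.
have nn' : n * n' = 1.
  apply: (@intr_inj R[i]); rewrite intrM -un -vn.
  by rewrite mulrACA -rmorphM /= uv rmorph1 mulr1.
have n'_ge0 : 0 <= n' by rewrite -(ler0z R[i]) -vn mul_conjC_ge0.
case: n' n'_ge0 nn' {vn} => // k _ /eqP.
by rewrite intUnitRing.mulzn_eq1 un => /andP[/eqP-> _].
Qed.

End IntegralSpan.

Arguments Zadjoin {R} w.

Lemma omega_d_trace_norm (R : realType) (d : nat) : d \in [:: 1; 2; 3; 7; 11]%N ->
  exists s m : int, omega_d R d + (omega_d R d)^* = s%:~R /\
                    omega_d R d * (omega_d R d)^* = m%:~R.
Proof.
have sqrt_d_sqr : Num.sqrt (d%:R : R) * Num.sqrt (d%:R) = d%:R.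
  by rewrite -expr2 sqr_sqrtr.
rewrite /omega_d !inE; move: sqrt_d_sqr; set r := Num.sqrt _ => r_sqr.
by move=> /or4P[|||/orP[]] /eqP d_val; subst d; rewrite /= in r_sqr *;
  [exists 0, 1 | exists 0, 2 | exists 1, 1 | exists 1, 2 | exists 1, 3];
  split; apply/eqP; rewrite -complex_intr eq_complex /=; apply/andP; split;
  apply/eqP; nra.
Qed.

Lemma O_d_Zadjoin (R : realType) (d : nat) : O_d R d = Zadjoin (omega_d R d).
Proof.
by apply/seteqP; split=> z [x [y ->]]; exists x, y; rewrite !complex_intr.
Qed.

Lemma H_form_conj (R : realType) (a : int) (b : R[i]) (c : int) (z : R[i]) :
  H_form R (a, b^*, c) z^* = H_form R (a, b, c) z.
Proof. by rewrite /H_form /= !conjCK; congr complex.Re; ring. Qed.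

Lemma H_form_unit (R : realType) (u : R[i]) (a : int) (b : R[i]) (c : int)
    (z : R[i]) :
  u * u^* = 1 -> H_form R (a, b * u^*, c) (u * z) = H_form R (a, b, c) z.
Proof.
move=> uu; rewrite /H_form /= !rmorphM /= conjCK; congr complex.Re.
transitivity ((a%:~R : R)%:C * (z * z^*) * (u * u^*) + b * z * (u * u^*)
              + b^* * z^* * (u * u^*) + (c%:~R : R)%:C); first by ring.
by rewrite uu !mulr1.
Qed.

Lemma H_form_shift (R : realType) (l : R[i]) (a : int) (b : R[i]) (c e : int)
    (z : R[i]) :
  a%:~R * (l * l^*) - (b * l + (b * l)^*) = e%:~R ->
  H_form R (a, b - a%:~R * l^*, c + e) (z + l) = H_form R (a, b, c) z.
Proof.
move=> le; rewrite /H_form /= !complex_intr intrD -le; congr complex.Re.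
by rewrite !(rmorphD, rmorphN, rmorphM) /= conjCK rmorph_int; ring.
Qed.

(* The coefficients change under [z -> z + l]; the floor merely converts to
   [int] a value that is integral whenever [b] and [l] lie in [O_d]. *)
Definition shift_form {R : realType} (l : R[i]) (t : int * R[i] * int) :
    int * R[i] * int :=
  let: (a, b, c) := t in
  (a, b - a%:~R * l^*,
   c + Num.floor (complex.Re (a%:~R * (l * l^*) - (b * l + (b * l)^*)))).

Lemma H_kDelta_reindex (R : realType) (d k Delta : nat)
    (g h : int * R[i] * int -> int * R[i] * int) (z z' : R[i]) :
  let I := H_index R d Delta in
  (forall t, I t -> I (g t)) -> (forall t, I t -> I (h t)) ->
  (forall t, I t -> h (g t) = t) -> (forall t, I t -> g (h t) = t) ->
  (forall t, I t -> H_form R (g t) z' = H_form R t z) ->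
  H_kDelta R d k Delta z' = H_kDelta R d k Delta z.
Proof.
move=> I Ig Ih hg gh g_form; rewrite /H_kDelta (@reindex_esum _ _ _ I I g).
  by apply: eq_esum => t It; rewrite g_form.
split=> [t /Ig // | t t' /set_mem It /set_mem It' gtt' | t It].
  by rewrite -(hg t It) -(hg t' It') gtt'.
by exists (h t); [exact: Ih | exact: gh].
Qed.

Section Symmetries.
Context {R : realType} {d k Delta : nat} {s m : int}.
Hypotheses (omega_trace : omega_d R d + (omega_d R d)^* = s%:~R)
           (omega_norm : omega_d R d * (omega_d R d)^* = m%:~R).
Local Notation O := (O_d R d).
Local Notation I := (H_index R d Delta).
Local Notation H := (H_kDelta R d k Delta).

Let O_intr (n : int) : O n%:~R.
Proof. by rewrite O_d_Zadjoin; exact: Zadjoin_intr. Qed.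
Let O_opp {a} : O a -> O (- a).
Proof. by rewrite O_d_Zadjoin; exact: Zadjoin_opp. Qed.
Let O_sub {a b} : O a -> O b -> O (a - b).
Proof. by rewrite O_d_Zadjoin; exact: Zadjoin_sub. Qed.
Let O_conj {a} : O a -> O a^*.
Proof. by rewrite O_d_Zadjoin; exact: Zadjoin_conj omega_trace _. Qed.
Let O_mul {a b} : O a -> O b -> O (a * b).
Proof. by rewrite O_d_Zadjoin; exact: Zadjoin_mul omega_trace omega_norm _ _. Qed.
Let O_trace {a} : O a -> exists n : int, a + a^* = n%:~R.
Proof. by rewrite O_d_Zadjoin; exact: Zadjoin_trace omega_trace _. Qed.
Let O_norm {a} : O a -> exists n : int, a * a^* = n%:~R.
Proof. by rewrite O_d_Zadjoin; exact: Zadjoin_norm omega_trace omega_norm _. Qed.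

Lemma H_kDelta_conj z : H z^* = H z.
Proof.
pose conj_form (t : int * R[i] * int) := (t.1.1, t.1.2^*, t.2).
have I_conj t : I t -> I (conj_form t).
  case: t => [[a b] c] [Ob [Hb a_lt0]]; split; first exact: O_conj.
  by rewrite /= conjCK mulrC.
have conj_formK t : conj_form (conj_form t) = t.
  by case: t => [[a b] c]; rewrite /conj_form /= conjCK.
apply: (@H_kDelta_reindex _ _ _ _ conj_form conj_form) => // t _.
by case: t => [[a b] c]; exact: H_form_conj.
Qed.

Lemma H_kDelta_unit u z : unit_O_d R d u -> H (u * z) = H z.
Proof.
move=> [Ou [v [Ov uv]]].
have uu : u * u^* = 1.
  move: Ou Ov; rewrite !O_d_Zadjoin => Ou Ov.
  exact: Zadjoin_unit_norm omega_trace omega_norm _ _ Ou Ov uv.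
pose scale_form (x : R[i]) (t : int * R[i] * int) := (t.1.1, t.1.2 * x, t.2).
have I_scale x t : O x -> x * x^* = 1 -> I t -> I (scale_form x t).
  move=> Ox xx; case: t => [[a b] c] [Ob [Hb a_lt0]]; split; first exact: O_mul.
  by rewrite /= rmorphM mulrACA xx mulr1.
have scaleK x y t : x * y = 1 -> scale_form y (scale_form x t) = t.
  by case: t => [[a b] c] xy; rewrite /scale_form /= -mulrA xy mulr1.
apply: (@H_kDelta_reindex _ _ _ _ (scale_form u^*) (scale_form u)).
- by move=> t; apply: I_scale; [exact: O_conj | rewrite conjCK mulrC].
- by move=> t; apply: I_scale.
- by move=> t _; apply: scaleK; rewrite mulrC.
- by move=> t _; apply: scaleK.
- by case=> [[a b] c] _; exact: H_form_unit.
Qed.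

Lemma shift_formE {l b} a c : O l -> O b ->
  exists2 e : int, a%:~R * (l * l^*) - (b * l + (b * l)^*) = e%:~R &
                   shift_form l (a, b, c) = (a, b - a%:~R * l^*, c + e).
Proof.
move=> Ol Ob; have [n ln] := O_norm Ol; have [n' bln'] := O_trace (O_mul Ob Ol).
have le : a%:~R * (l * l^*) - (b * l + (b * l)^*) = (a * n - n')%:~R.
  by rewrite ln bln' intrB intrM.
by exists (a * n - n') => //; rewrite /shift_form (floor_Re_intr le).
Qed.

Lemma H_index_shift l t : O l -> I t -> I (shift_form l t).
Proof.
case: t => [[a b] c] Ol [Ob [Hb a_lt0]]; have [e le ->] := shift_formE a c Ol Ob.
split; first exact: O_sub Ob (O_mul (O_intr a) (O_conj Ol)).
split=> //; rewrite /= -Hb !complex_intr intrM intrD -le.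
by rewrite !(rmorphB, rmorphM) /= conjCK rmorph_int; ring.
Qed.

Lemma shift_formK l t : O l -> I t -> shift_form (- l) (shift_form l t) = t.
Proof.
case: t => [[a b] c] Ol [Ob _]; have [e le ->] := shift_formE a c Ol Ob.
have Ob' := O_sub Ob (O_mul (O_intr a) (O_conj Ol)).
have [e' le' ->] := shift_formE a (c + e) (O_opp Ol) Ob'.
have -> : e' = - e.
  apply: (@intr_inj R[i]); rewrite -le' intrN -le.
  by rewrite !(rmorphN, rmorphB, rmorphM) /= conjCK rmorph_int; ring.
by rewrite addrK rmorphN /= mulrN opprK subrK.
Qed.

Lemma H_kDelta_translate l z : O l -> H (z + l) = H z.
Proof.
move=> Ol; apply: (@H_kDelta_reindex _ _ _ _ (shift_form l) (shift_form (- l))).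
- by move=> t; exact: H_index_shift.
- by move=> t; apply: H_index_shift; exact: O_opp.
- by move=> t; exact: shift_formK.
- by move=> t It; rewrite -{1}(opprK l); apply: shift_formK => //; exact: O_opp.
- case=> [[a b] c] [Ob _]; have [e le ->] := shift_formE a c Ol Ob.
  exact: H_form_shift.
Qed.

End Symmetries.

(* As in the statement: a bare [z^*] now denotes [conjc z], not [Num.conj z]. *)
Local Open Scope complex_scope.

Theorem proposition2p3 (R : realType) (d k Delta : nat) :
  d \in [:: 1; 2; 3; 7; 11]%N ->
  (0 < Delta)%N ->
  ~ (exists beta : R[i], O_d R d beta /\ (Delta%:R)%:C = beta * beta^*) ->
  odd k ->
  forall z : R[i],
    H_kDelta R d k Delta z^* = H_kDelta R d k Delta z /\
    (forall u : R[i], unit_O_d R d u ->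
       H_kDelta R d k Delta (u * z) = H_kDelta R d k Delta z) /\
    (forall lambda : R[i], O_d R d lambda ->
       H_kDelta R d k Delta (z + lambda) = H_kDelta R d k Delta z).
Proof.
move=> d_small _ _ _ z; have [s [m [trace norm]]] := omega_d_trace_norm R d d_small.
split; first exact: H_kDelta_conj trace z.
split=> [u | l]; first exact: H_kDelta_unit trace norm u z.
exact: H_kDelta_translate trace norm l z.
Qed.
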